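(* Let $n \ge 1$ and $r \ge 1$ be integers, $p \in (0,1)$, and let $X_1,\dots,X_r$ be i.i.d. with $X_i = \frac{1}{n}Y_i$, $Y_i \sim \mathrm{Bin}(n,p)$. Let $Z = \min_{1\le i\le r} X_i$. Fix $\delta \in (0,1)$ and define \[ \Delta(\delta,p,n) = \log_2\frac{2}{\delta} + 4\log_2(n+1) + \Big[\log_2\frac{p}{1-p}\Big]_+ . \] Assume $\Delta(\delta,p,n) < \log_2 r$. Then: (i) if $\mathsf{KL}(0\Vert p) \ge \frac{\log_2 r - \Delta(\delta,p,n)}{n}$, then with probability at least $1-\delta$, \[ Z < p \quad\text{and}\quad \frac{\log_2 r - \Delta(\delta,p,n)}{n} \le \mathsf{KL}(Z\Vert p) \le \frac{\log_2 r + \Delta(\delta,p,n)}{n}; \] (ii) if $\mathsf{KL}(0\Vert p) < \frac{\log_2 r - \Delta(\delta,p,n)}{n}$, then $\mathbb{P}(Z = 0) \ge 1-\delta$.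
   Context: All logarithms are base $2$ unless written $\ln$. For $\alpha \in [0,1]$ and $\beta \in (0,1)$, $\mathsf{KL}(\alpha\Vert\beta) = \alpha\log_2\frac{\alpha}{\beta} + (1-\alpha)\log_2\frac{1-\alpha}{1-\beta}$ denotes the KL divergence (in bits) between $\mathrm{Bernoulli}(\alpha)$ and $\mathrm{Bernoulli}(\beta)$, with the convention $0\log 0 = 0$ (so $\mathsf{KL}(0\Vert p) = \log_2\frac{1}{1-p}$). For real $x$, $[x]_+ = \max(x,0)$. *)

From HB Require Import structures.
From mathcomp Require Import all_boot all_order all_algebra.
From mathcomp Require Import all_classical all_reals all_analysis.
Set Implicit Arguments. Unset Strict Implicit. Unset Printing Implicit Defensive.
Import Order.TTheory GRing.Theory Num.Theory.
Local Open Scope ring_scope.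

Section Defs.
Variable R : realType.

Definition log2 (x : R) : R := ln x / ln 2.

Definition xlogratio (a b : R) : R := if a == 0 then 0 else a * log2 (a / b).

(* KL(alpha || beta) in bits between Bernoulli(alpha) and Bernoulli(beta) *)
Definition KL (alpha beta : R) : R :=
  xlogratio alpha beta + xlogratio (1 - alpha) (1 - beta).

Definition posp (x : R) : R := Num.max x 0.

Definition Delta (delta p : R) (n : nat) : R :=
  log2 (2 / delta) + 4 * log2 (n.+1)%:R + posp (log2 (p / (1 - p))).

Definition binom_pmf (n : nat) (p : R) (k : nat) : R :=
  'C(n, k)%:R * p ^+ k * (1 - p) ^+ (n - k).

(* Sample space for (Y_1,...,Y_r), Y_i in {0..n}; joint law of r i.i.d.
   Bin(n,p) variables is the product pmf. *)
Definition iid_binom_prob (n r : nat) (p : R)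
    (E : pred {ffun 'I_r -> 'I_n.+1}) : R :=
  \sum_(y : {ffun 'I_r -> 'I_n.+1} | E y) \prod_(i < r) binom_pmf n p (y i).

(* Z = min_i X_i = (min_i Y_i) / n  (for r >= 1; values Y_i <= n) *)
Definition Zmin (n r : nat) (y : {ffun 'I_r -> 'I_n.+1}) : R :=
  (\big[minn/n]_(i < r) (y i : nat))%:R / n%:R.

End Defs.

Arguments iid_binom_prob {R} n r p E.
Arguments Zmin {R n r} y.
Arguments Delta {R} delta p n.
Arguments KL {R} alpha beta.

From HB Require Import structures.
From mathcomp Require Import all_boot all_order all_algebra.
From mathcomp Require Import all_classical all_reals all_analysis.
From mathcomp Require Import ring lra zify.
Set Implicit Arguments. Unset Strict Implicit. Unset Printing Implicit Defensive.
Import Order.TTheory GRing.Theory Num.Theory.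
Local Open Scope ring_scope.

(* Work in nats: put D = Delta ln 2, L = ln r - D and U = ln r + D.  Since
   Bin(n,p)(k) = Bin(n,k/n)(k) exp(-n KL(k/n || p)) and the first factor lies in
   [1/(n+1), 1], every value k with n KL(k/n || p) > U has probability at most e^-U,
   so by a union bound over the r samples and the n+1 values none of them is
   observed, except with probability (n+1) e^-D <= delta/2.  On the other side, let
   k0 be the largest k < n p with n KL(k/n || p) >= L.  Comparing Bin(n,p)(k0) with
   its right neighbour (or with the mode) gives
   Bin(n,p)(k0) >= e^-L / ((n+1) n max(p/(1-p), 1)) >= 2/(delta r), so some sample
   equals k0 except with probability (1-q)^r <= 1/(r q) <= delta/2.  Then
   Z <= k0/n < p, and as KL(. || p) decreases on [0, p] both bounds follow.  In
   case (ii) the same estimate applies to k0 = 0 directly. *)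

Section BinomialPmf.
Variables (R : realType) (n : nat) (p : R).

Lemma binom_pmf_ge0 k : 0 <= p <= 1 -> 0 <= binom_pmf n p k.
Proof. by case/andP=> p0 p1; rewrite !mulr_ge0 ?exprn_ge0 ?subr_ge0. Qed.

Lemma sum_binom_pmf : \sum_(k < n.+1) binom_pmf n p k = 1.
Proof.
rewrite -(expr1n R n) -(subrK p 1) exprDn.
by apply: eq_bigr => k _; rewrite /binom_pmf -[RHS]mulr_natl; ring.
Qed.

Lemma binom_pmf_le1 k : 0 <= p <= 1 -> binom_pmf n p k <= 1.
Proof.
move=> p01; have [kn|nk] := leqP k n; last by rewrite /binom_pmf bin_small // !mul0r.
rewrite -sum_binom_pmf (bigD1 (Ordinal (kn : k < n.+1)%N)) //= lerDl.
by apply: sumr_ge0 => i _; exact: binom_pmf_ge0.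
Qed.

Lemma binom_pmfS k : (k < n)%N ->
  binom_pmf n p k.+1 * ((k.+1)%:R * (1 - p)) = binom_pmf n p k * ((n - k)%:R * p).
Proof.
move=> kn; have binS : 'C(n, k.+1)%:R * (k.+1)%:R = (n - k)%:R * 'C(n, k)%:R :> R.
  by rewrite -!natrM mulnC mul_bin_left.
rewrite /binom_pmf; have -> : (1 - p) ^+ (n - k) = (1 - p) ^+ (n - k.+1) * (1 - p).
  by rewrite -exprSr subnSK.
rewrite exprS.
transitivity ('C(n, k.+1)%:R * (k.+1)%:R * (p * p ^+ k * (1 - p) ^+ (n - k.+1) * (1 - p)));
  first ring.
by rewrite binS; ring.
Qed.

Lemma binom_ratio_diff j : (j <= n)%N ->
  (n - j)%:R * p - (j.+1)%:R * (1 - p) = (n.+1)%:R * p - (j.+1)%:R.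
Proof. by move=> jn; rewrite natrB // -!natr1; ring. Qed.

Lemma binom_pmf_le_succ j : 0 <= p < 1 -> (j.+1)%:R <= (n.+1)%:R * p ->
  binom_pmf n p j <= binom_pmf n p j.+1.
Proof.
case/andP=> p0 p1 hj.
have jn : (j < n)%N.
  rewrite -ltnS -(ltr_nat R); apply: le_lt_trans hj _.
  by rewrite gtr_pMr // ltr0n.
have c0 : 0 < (j.+1)%:R * (1 - p) by rewrite mulr_gt0 ?ltr0n ?subr_gt0.
rewrite -(ler_pM2r c0) (binom_pmfS jn); apply: ler_wpM2l.
  by apply: binom_pmf_ge0; rewrite p0 ltW.
by rewrite -subr_ge0 (binom_ratio_diff (ltnW jn)) subr_ge0.
Qed.

Lemma binom_pmf_succ_le j : 0 <= p < 1 -> (j < n)%N -> (n.+1)%:R * p <= (j.+1)%:R ->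
  binom_pmf n p j.+1 <= binom_pmf n p j.
Proof.
case/andP=> p0 p1 jn hj.
have c0 : 0 < (j.+1)%:R * (1 - p) by rewrite mulr_gt0 ?ltr0n ?subr_gt0.
rewrite -(ler_pM2r c0) (binom_pmfS jn); apply: ler_wpM2l.
  by apply: binom_pmf_ge0; rewrite p0 ltW.
by rewrite -subr_le0 (binom_ratio_diff (ltnW jn)) subr_le0.
Qed.

Lemma binom_pmf_le_mode m j : 0 <= p < 1 -> m%:R <= (n.+1)%:R * p <= (m.+1)%:R ->
  (j <= n)%N -> binom_pmf n p j <= binom_pmf n p m.
Proof.
move=> p01 /andP[lo hi] jn; have [jm|mj] := leqP j m.
  have up d : (d <= m)%N -> binom_pmf n p (m - d) <= binom_pmf n p m.
    elim: d => [|d IH] dm; first by rewrite subn0.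
    apply: le_trans _ (IH (ltnW dm)); have -> : (m - d = (m - d.+1).+1)%N by lia.
    by apply: binom_pmf_le_succ => //; apply: le_trans lo; rewrite ler_nat; lia.
  by have := up (m - j)%N (leq_subr _ _); rewrite subKn.
have down d : (m + d <= n)%N -> binom_pmf n p (m + d) <= binom_pmf n p m.
  elim: d => [|d IH] dn; first by rewrite addn0.
  apply: le_trans _ (IH _); last by lia.
  rewrite addnS.
  apply: binom_pmf_succ_le => //; first by lia.
  by apply: le_trans hi _; rewrite ler_nat; lia.
by have := down (j - m)%N; rewrite subnKC ?(ltnW mj) //; apply.
Qed.

Lemma binom_pmf_mode_ge m : 0 <= p < 1 -> m%:R <= (n.+1)%:R * p <= (m.+1)%:R ->
  (n.+1)%:R^-1 <= binom_pmf n p m.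
Proof.
move=> p01 hm; rewrite -div1r -[X in X / _]sum_binom_pmf ler_pdivrMr ?ltr0n //.
have -> : binom_pmf n p m * (n.+1)%:R = \sum_(j < n.+1) binom_pmf n p m.
  by rewrite sumr_const card_ord mulr_natr.
apply: ler_sum => j _.
exact: binom_pmf_le_mode p01 hm (ltn_ord j : (j <= n)%N).
Qed.

Lemma binom_pmf_succ_le_max k : 0 < p < 1 -> (k < n)%N ->
  binom_pmf n p k.+1 <= n%:R * Num.max (p / (1 - p)) 1 * binom_pmf n p k.
Proof.
case/andP=> p0 p1 kn; have q0 : 0 < 1 - p by rewrite subr_gt0.
have pk0 : 0 <= binom_pmf n p k by rewrite binom_pmf_ge0 ?ltW.
apply: (@le_trans _ _ (n%:R * (p / (1 - p)) * binom_pmf n p k)); last first.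
  by rewrite ler_wpM2r // ler_wpM2l ?ler0n // le_max lexx.
have -> : n%:R * (p / (1 - p)) * binom_pmf n p k = n%:R * p * binom_pmf n p k / (1 - p).
  by ring.
rewrite ler_pdivlMr //.
have pk1 : 0 <= binom_pmf n p k.+1 by rewrite binom_pmf_ge0 ?ltW.
apply: (@le_trans _ _ (binom_pmf n p k.+1 * ((k.+1)%:R * (1 - p)))).
  by rewrite ler_wpM2l // ler_peMl ?ler1n // ltW.
rewrite (binom_pmfS kn) [X in _ <= X]mulrC ler_wpM2l // ler_wpM2r ?(ltW p0) //.
by rewrite ler_nat leq_subr.
Qed.

Lemma binom_pmf_last_crossing_ge (c : R) k : 0 < p < 1 ->
  c <= (n.+1)%:R^-1 -> k%:R < n%:R * p ->
  ((k.+1)%:R < n%:R * p -> c <= binom_pmf n p k.+1) ->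
  c <= n%:R * Num.max (p / (1 - p)) 1 * binom_pmf n p k.
Proof.
move=> p01 c_le kp next; have /andP[p0 p1] := p01.
have p_lt1 : 0 <= p < 1 by rewrite ltW.
have p_le1 : 0 <= p <= 1 by rewrite !ltW.
have np_le_n : n%:R * p <= n%:R by rewrite ler_piMr ?ler0n ?ltW.
have kn : (k < n)%N by rewrite -(ltr_nat R) (lt_le_trans kp).
have nM1 : 1 <= n%:R * Num.max (p / (1 - p)) 1.
  have n1 : 1 <= n%:R :> R by rewrite ler1n (leq_ltn_trans (leq0n k) kn).
  by rewrite -[X in X <= _]mulr1 ler_pM ?ler01 // le_max lexx orbT.
have via_succ : c <= binom_pmf n p k.+1 ->
    c <= n%:R * Num.max (p / (1 - p)) 1 * binom_pmf n p k.
  by move=> /le_trans; apply; apply: binom_pmf_succ_le_max.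
have [/next/via_succ //|np_ge] := ltP (k.+1)%:R (n%:R * p).
(* Otherwise [n p <= k + 1 < n p + 1], so the mode of the binomial is [k] or [k + 1]. *)
have [mode_k|mode_succ] := leP ((n.+1)%:R * p) (k.+1)%:R.
  have pk : (n.+1)%:R^-1 <= binom_pmf n p k.
    apply: binom_pmf_mode_ge p_lt1 _.
    by rewrite mode_k -natr1 mulrDl mul1r andbT ler_wpDr // ltW.
  by apply: le_trans c_le (le_trans pk _); rewrite ler_peMl // binom_pmf_ge0.
apply: via_succ (le_trans c_le (binom_pmf_mode_ge p_lt1 _)).
by rewrite (ltW mode_succ) -natr1 mulrDl mul1r -natr1 lerD // ltW.
Qed.

End BinomialPmf.

Section KullbackLeibler.
Variable R : realType.

Definition xlnratio (a b : R) : R := if a == 0 then 0 else a * ln (a / b).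

Definition KLe (a b : R) : R := xlnratio a b + xlnratio (1 - a) (1 - b).

Lemma ln2_gt0 : 0 < ln (2 : R).
Proof. by rewrite ln_gt0 // ltr1n. Qed.

Lemma log2_ln (x : R) : log2 x * ln 2 = ln x.
Proof. by rewrite /log2 divfK // gt_eqF // ln2_gt0. Qed.

Lemma KL_ln2 (a b : R) : KL a b * ln 2 = KLe a b.
Proof.
have xlr c d : xlogratio c d * ln 2 = xlnratio c d.
  by rewrite /xlogratio /xlnratio; case: eqP => _; rewrite ?mul0r // -mulrA log2_ln.
by rewrite /KL mulrDl !xlr.
Qed.

Lemma xlnratio_id (a : R) : 0 < a -> xlnratio a a = 0.
Proof. by move=> a0; rewrite /xlnratio gt_eqF // divff ?gt_eqF // ln1 mulr0. Qed.

Lemma xlnratio_ge (a b : R) : 0 <= a -> 0 < b -> a - b <= xlnratio a b.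
Proof.
rewrite /xlnratio => a0 b0; case: eqP => [->|/eqP a_neq0]; first by rewrite sub0r oppr_le0 ltW.
have {a0 a_neq0} a0 : 0 < a by rewrite lt_def a_neq0.
have ln_le : ln (b / a) <= b / a - 1.
  have := @le_ln1Dx R (b / a - 1); rewrite addrCA subrr addr0; apply.
  by have := divr_gt0 b0 a0; lra.
move: ln_le; rewrite -(ler_pM2l a0) mulrBr mulr1 [a * (b / a)]mulrC divfK ?gt_eqF // => ln_le.
by rewrite -invf_div lnV ?posrE ?divr_gt0 // mulrN lerNr opprB.
Qed.

Lemma xlnratio_split (a b c : R) : 0 <= a -> 0 < b -> 0 < c ->
  xlnratio a c = xlnratio a b + a * ln (b / c).
Proof.
rewrite /xlnratio => a0 b0 c0; case: eqP => [->|/eqP a_neq0]; first by rewrite mul0r addr0.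
have {a0 a_neq0} a0 : 0 < a by rewrite lt_def a_neq0.
by rewrite -mulrDr -lnM ?posrE ?divr_gt0 // mulrA divfK ?gt_eqF.
Qed.

Lemma KLe_decreasing (x y p : R) : 0 <= x <= y -> y <= p < 1 -> 0 < p ->
  KLe y p <= KLe x p.
Proof.
case/andP=> x0 xy /andP[yp p1] p0.
have [y0|y_neq0] := eqVneq y 0.
  by have -> : x = y by apply: le_anti; rewrite xy y0 x0.
have y0 : 0 < y by rewrite lt_def y_neq0 (le_trans x0 xy).
have y1 : 0 < 1 - y by rewrite subr_gt0 (le_lt_trans yp p1).
have x1 : 0 <= 1 - x by rewrite subr_ge0 ltW // (le_lt_trans xy (le_lt_trans yp p1)).
have q0 : 0 < 1 - p by rewrite subr_gt0.
rewrite /KLe (xlnratio_split x0 y0 p0) (xlnratio_split x1 y1 q0).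
rewrite (xlnratio_split (ltW y0) y0 p0) (xlnratio_split (ltW y1) y1 q0) !xlnratio_id //.
have G1 := xlnratio_ge x0 y0; have G2 := xlnratio_ge x1 y1.
have L1 : ln (y / p) <= 0 by rewrite ln_le0 // ler_pdivrMr // mul1r.
have L2 : 0 <= ln ((1 - y) / (1 - p)) by rewrite ln_ge0 // ler_pdivlMr // mul1r lerB.
have yx : 0 <= y - x by rewrite subr_ge0.
have := mulr_ge0 yx (_ : 0 <= - ln (y / p)); rewrite oppr_ge0 => /(_ L1).
have := mulr_ge0 yx L2.
nra.
Qed.

Lemma expR_xlnratio (a b N : R) (m : nat) : 0 <= a -> 0 < b -> N * a = m%:R ->
  a ^+ m * expR (- (N * xlnratio a b)) = b ^+ m.
Proof.
rewrite /xlnratio => a0 b0 Na; case: eqP => [a_eq0|/eqP a_neq0].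
  move: Na; rewrite a_eq0 mulr0 => /esym/eqP; rewrite pnatr_eq0 => /eqP ->.
  by rewrite !expr0 oppr0 expR0 mulr1.
have {a0 a_neq0} a0 : 0 < a by rewrite lt_def a_neq0.
rewrite mulrA Na -mulrN -lnV ?posrE ?divr_gt0 // invf_div expRM_natl.
by rewrite lnK ?posrE ?divr_gt0 // -exprMn mulrC divfK ?gt_eqF.
Qed.

End KullbackLeibler.

Section BinomialKL.
Variables (R : realType) (n : nat) (p : R).
Hypothesis p01 : 0 < p < 1.

Lemma binom_pmf_KLe k : (0 < n)%N -> (k <= n)%N ->
  binom_pmf n p k =
  binom_pmf n (k%:R / n%:R) k * expR (- (n%:R * KLe (k%:R / n%:R) p)).
Proof.
move=> n_gt0 kn; case/andP: p01 => p0 p1; set x := k%:R / n%:R.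
have n0 : (0 : R) < n%:R by rewrite ltr0n.
have x0 : 0 <= x by rewrite divr_ge0.
have x1 : 0 <= 1 - x by rewrite subr_ge0 ler_pdivrMr // mul1r ler_nat.
have nx : n%:R * x = k%:R by rewrite mulrC divfK ?gt_eqF.
have nx' : n%:R * (1 - x) = (n - k)%:R by rewrite mulrBr mulr1 nx natrB.
rewrite /KLe mulrDr opprD expRD /binom_pmf.
rewrite -(expR_xlnratio x0 p0 nx) -(expR_xlnratio x1 _ nx') ?subr_gt0 //.
by ring.
Qed.

Lemma binom_pmf_le_expR_KLe k : (0 < n)%N -> (k <= n)%N ->
  binom_pmf n p k <= expR (- (n%:R * KLe (k%:R / n%:R) p)).
Proof.
move=> n_gt0 kn; have n0 : (0 : R) < n%:R by rewrite ltr0n.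
rewrite binom_pmf_KLe // ler_piMl ?expR_ge0 // binom_pmf_le1 //.
by rewrite divr_ge0 //= ler_pdivrMr // mul1r ler_nat.
Qed.

Lemma expR_KLe_le_binom_pmf k : (k < n)%N ->
  expR (- (n%:R * KLe (k%:R / n%:R) p)) / (n.+1)%:R <= binom_pmf n p k.
Proof.
move=> kn; have n_gt0 : (0 < n)%N by apply: leq_ltn_trans kn.
have n0 : (0 : R) < n%:R by rewrite ltr0n.
rewrite (binom_pmf_KLe n_gt0 (ltnW kn)) mulrC ler_wpM2r ?expR_ge0 //.
set x := k%:R / n%:R.
have x0 : 0 <= x by rewrite divr_ge0.
have x1 : x < 1 by rewrite ltr_pdivrMr // mul1r ltr_nat.
have nx : (n.+1)%:R * x = k%:R + x by rewrite -natr1 mulrDl mul1r mulrC divfK ?gt_eqF.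
apply: binom_pmf_mode_ge; rewrite ?x0 ?x1 // nx -natr1.
by apply/andP; split; lra.
Qed.

End BinomialKL.

Section IidBinomial.
Variables (R : realType) (n r : nat) (p : R).
Local Notation Pr := (iid_binom_prob n r p).
Local Notation weight y := (\prod_(i < r) binom_pmf n p (y i)).

Lemma iid_binom_probE E : Pr E = \sum_y (E y)%:R * weight y.
Proof.
rewrite /iid_binom_prob big_mkcond; apply: eq_bigr => y _.
by case: (E y); rewrite ?mul1r ?mul0r.
Qed.

Lemma iid_binom_prob_family (A : 'I_r -> pred 'I_n.+1) :
  Pr (fun y => [forall i, y i \in A i]) = \prod_(i < r) \sum_(k in A i) binom_pmf n p k.
Proof.
rewrite (bigA_distr_big_dep _ (fun i (k : 'I_n.+1) => binom_pmf n p k)).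
by apply: eq_bigl => y; apply/forallP/familyP.
Qed.

Lemma iid_binom_probT : Pr (fun _ => true) = 1.
Proof.
rewrite [LHS](_ : _ = Pr (fun y => [forall i, y i \in predT])).
  by rewrite iid_binom_prob_family big1 // => i _; rewrite -(sum_binom_pmf n p); apply: eq_bigl.
by apply: eq_bigl => y; apply/esym/forallP.
Qed.

Lemma iid_binom_probC E : Pr E = 1 - Pr (fun y => ~~ E y).
Proof. by rewrite -iid_binom_probT /iid_binom_prob [X in _ = X - _](bigID E) addrK. Qed.

Lemma iid_binom_prob_coord i (T : pred 'I_n.+1) :
  Pr (fun y => y i \in T) = \sum_(k in T) binom_pmf n p k.
Proof.
pose A j := if j == i then T else predT.
rewrite [LHS](_ : _ = Pr (fun y => [forall j, y j \in A j])); last first.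
  apply: eq_bigl => y; apply/idP/forallP => [yT j|/(_ i)]; rewrite /A.
    by case: eqP => [->|].
  by rewrite eqxx.
rewrite iid_binom_prob_family (bigD1 i) //= [X in _ * X]big1 => [|j ji]; last first.
  by rewrite /A (negbTE ji) -(sum_binom_pmf n p); apply: eq_bigl.
by rewrite mulr1; apply: eq_bigl => k; rewrite /A eqxx.
Qed.

Lemma iid_binom_prob_avoid (k : 'I_n.+1) :
  Pr (fun y => [forall i, y i != k]) = (1 - binom_pmf n p k) ^+ r.
Proof.
rewrite [LHS](_ : _ = Pr (fun y => [forall i, y i \in [pred j | j != k]])) //.
rewrite iid_binom_prob_family prodr_const card_ord; congr (_ ^+ _).
by rewrite -(sum_binom_pmf n p) [in RHS](bigD1 k) //= addrC addrK; apply: eq_bigl.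
Qed.

Hypothesis p01 : 0 <= p <= 1.

Lemma weight_ge0 y : 0 <= weight y.
Proof. by apply: prodr_ge0 => i _; exact: binom_pmf_ge0. Qed.

Lemma iid_binom_prob_le (E F : pred {ffun 'I_r -> 'I_n.+1}) :
  (forall y, E y -> F y) -> Pr E <= Pr F.
Proof.
move=> EF; rewrite !iid_binom_probE; apply: ler_sum => y _.
rewrite ler_wpM2r ?weight_ge0 //.
by case Ey: (E y); rewrite ?(EF _ Ey) ?ler0n.
Qed.

Lemma iid_binom_prob_union (E F : pred {ffun 'I_r -> 'I_n.+1}) :
  Pr (fun y => E y || F y) <= Pr E + Pr F.
Proof.
rewrite !iid_binom_probE -big_split /=; apply: ler_sum => y _; rewrite -mulrDl.
rewrite ler_wpM2r ?weight_ge0 //.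
by case: (E y); case: (F y); rewrite ?addr0 ?add0r // lerDl.
Qed.

Lemma iid_binom_prob_exists (T : pred 'I_n.+1) :
  Pr (fun y => [exists i, y i \in T]) <= r%:R * \sum_(k in T) binom_pmf n p k.
Proof.
have -> : r%:R * \sum_(k in T) binom_pmf n p k = \sum_(i < r) Pr (fun y => y i \in T).
  by rewrite (eq_bigr _ (fun i _ => iid_binom_prob_coord i T)) sumr_const card_ord mulr_natl.
rewrite iid_binom_probE (eq_bigr _ (fun i _ => iid_binom_probE _)) exchange_big /=.
apply: ler_sum => y _; rewrite -mulr_suml ler_wpM2r ?weight_ge0 //.
case: existsP => [[i yi]|_]; last by apply: sumr_ge0 => i _; exact: ler0n.
by rewrite (bigD1 i) //= yi lerDl sumr_ge0 // => j _; exact: ler0n.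
Qed.

Lemma iid_binom_prob_avoid_le (k : 'I_n.+1) : 0 < r%:R * binom_pmf n p k ->
  Pr (fun y => [forall i, y i != k]) <= (r%:R * binom_pmf n p k)^-1.
Proof.
move=> rq0; rewrite iid_binom_prob_avoid.
apply: (@le_trans _ _ (expR (- (r%:R * binom_pmf n p k)))).
  rewrite -(mulrN r%:R) expRM_natl lerXn2r ?nnegrE ?expR_ge0 ?expR_ge1Dx //.
  by rewrite subr_ge0 binom_pmf_le1.
by rewrite expRN lef_pV2 ?posrE ?expR_gt0 // (le_trans _ (expR_ge1Dx _)) // lerDr.
Qed.

End IidBinomial.

Section Zmin.
Variables (R : realType) (n r : nat).

Lemma Zmin_le (y : {ffun 'I_r -> 'I_n.+1}) i : @Zmin R n r y <= (y i)%:R / n%:R.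
Proof.
rewrite /Zmin ler_wpM2r ?invr_ge0 ?ler0n // ler_nat.
by have := bigmin_le n i (fun j => (y j : nat)); rewrite minEnat.
Qed.

Lemma Zmin_attained (y : {ffun 'I_r -> 'I_n.+1}) : (0 < r)%N ->
  exists i, @Zmin R n r y = (y i)%:R / n%:R.
Proof.
move=> r_gt0; have yn j : (y j <= n)%N by rewrite -ltnS.
have [i _] := @eq_bigmin _ nat _ n (Ordinal r_gt0) predT (fun j => (y j : nat)) isT
  (fun j _ => yn j).
by rewrite minEnat /Zmin => ->; exists i.
Qed.

End Zmin.

Section MinOfBinomials.
Variables (R : realType) (n r : nat) (p delta : R).
Hypotheses (n_gt0 : (0 < n)%N) (r_gt0 : (0 < r)%N).
Hypotheses (p01 : 0 < p < 1) (delta01 : 0 < delta < 1).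
Hypothesis Delta_lt_log2r : Delta delta p n < log2 r%:R.

Local Notation Pr := (iid_binom_prob n r p).
Local Notation D := (Delta delta p n * ln 2).
Local Notation M := (Num.max (p / (1 - p)) 1).
Local Notation nKL x := (n%:R * KLe x p).

Let n0 : (0 : R) < n%:R. Proof. by rewrite ltr0n. Qed.
Let r0 : (0 : R) < r%:R. Proof. by rewrite ltr0n. Qed.
Let d0 : 0 < delta. Proof. by case/andP: delta01. Qed.
Let p01' : 0 <= p <= 1. Proof. by case/andP: p01 => /ltW -> /ltW. Qed.
Let M_ge1 : 1 <= M. Proof. by rewrite le_max lexx orbT. Qed.

Lemma expR_Delta : expR D = 2 / delta * (n.+1)%:R ^+ 4 * M.
Proof.
have /andP[p0 p1] := p01.
have expR_max l : expR (Num.max l 0) = Num.max (expR l) 1.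
  by rewrite /Order.max -expR0 ltr_expR; case: ifP.
rewrite /Delta /posp (mulrDl _ _ (ln 2)) (mulrDl _ _ (ln 2)) -(mulrA 4) !log2_ln.
rewrite (maxr_pMl _ _ (ltW (ln2_gt0 R))) mul0r log2_ln !expRD expR_max (expRM_natl 4).
by rewrite !lnK // posrE ?divr_gt0 ?ltr0n ?subr_gt0.
Qed.

Lemma lnr_sub_Delta_gt0 : 0 < ln r%:R - D.
Proof. by rewrite subr_gt0 -(log2_ln r%:R) ltr_pM2r // ln2_gt0. Qed.

Lemma r_expR_sub_Delta : r%:R * expR (- (ln r%:R - D)) = expR D.
Proof. by rewrite opprB expRB lnK ?posrE // mulrC divfK // gt_eqF. Qed.

Lemma KL_ge_lowerE x :
  ((log2 r%:R - Delta delta p n) / n%:R <= KL x p) = (ln r%:R - D <= nKL x).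
Proof.
rewrite ler_pdivrMr // -(ler_pM2r (ln2_gt0 R)) (mulrBl (ln 2) (log2 r%:R)) log2_ln.
by rewrite [X in _ <= X]mulrAC KL_ln2 [X in _ <= X]mulrC.
Qed.

Lemma KL_le_upperE x :
  (KL x p <= (log2 r%:R + Delta delta p n) / n%:R) = (nKL x <= ln r%:R + D).
Proof.
rewrite ler_pdivlMr // -(ler_pM2r (ln2_gt0 R)) (mulrDl (log2 r%:R)) log2_ln.
by rewrite [X in X <= _]mulrAC KL_ln2 [X in X <= _]mulrC.
Qed.

Lemma KL_lt_lowerE x :
  (KL x p < (log2 r%:R - Delta delta p n) / n%:R) = (nKL x < ln r%:R - D).
Proof.
rewrite ltr_pdivlMr // -(ltr_pM2r (ln2_gt0 R)) (mulrBl (ln 2) (log2 r%:R)) log2_ln.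
by rewrite [X in X < _]mulrAC KL_ln2 [X in X < _]mulrC.
Qed.

Lemma prob_avoid_le_half (k : 'I_n.+1) : 2 / delta <= r%:R * binom_pmf n p k ->
  Pr (fun y => [forall i, y i != k]) <= delta / 2.
Proof.
move=> big; have pos : 0 < r%:R * binom_pmf n p k by apply: lt_le_trans big; rewrite divr_gt0.
apply: le_trans (iid_binom_prob_avoid_le p01' pos) _.
by rewrite -invf_div lef_pV2 ?posrE ?divr_gt0.
Qed.

Lemma prob_KLe_tail :
  Pr (fun y => [exists i, ln r%:R + D < nKL ((y i)%:R / n%:R)]) <= delta / 2.
Proof.
pose T := [pred k : 'I_n.+1 | ln r%:R + D < nKL (k%:R / n%:R)].
set e := expR (- (ln r%:R + D)).
apply: le_trans (iid_binom_prob_exists r p01' T) _.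
have sum_le : \sum_(k in T) binom_pmf n p k <= \sum_(k < n.+1) e.
  rewrite big_mkcond; apply: ler_sum => k _; case: ifP => [|_]; last exact: expR_ge0.
  rewrite inE => hk; apply: le_trans (binom_pmf_le_expR_KLe p01 n_gt0 _) _.
    by rewrite -ltnS.
  by rewrite ler_expR lerN2 ltW.
apply: le_trans (ler_wpM2l (ltW r0) sum_le) _.
have -> : r%:R * (\sum_(k < n.+1) e) = (n.+1)%:R / expR D.
  rewrite sumr_const card_ord /e opprD expRD !expRN lnK ?posrE // -mulr_natr.
  by field; rewrite ?gt_eqF ?expR_gt0.
rewrite ler_pdivrMr ?expR_gt0 // expR_Delta.
have -> : delta / 2 * (2 / delta * (n.+1)%:R ^+ 4 * M) = (n.+1)%:R ^+ 4 * M.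
  by field; rewrite gt_eqF.
have n1 : 1 <= (n.+1)%:R :> R by rewrite ler1n.
rewrite -[X in X <= _]mulr1 ler_pM ?ler01 ?ler0n ?M_ge1 //.
by rewrite -[X in X <= _]expr1 ler_weXn2l.
Qed.

Lemma exists_typical_value : ln r%:R - D <= nKL 0 ->
  exists k0 : 'I_n.+1, [/\ k0%:R / n%:R < p, ln r%:R - D <= nKL (k0%:R / n%:R)
                         & 2 / delta <= r%:R * binom_pmf n p k0].
Proof.
move=> lo0; have /andP[p0 p1] := p01.
pose P (k : 'I_n.+1) := (k%:R < n%:R * p) && (ln r%:R - D <= nKL (k%:R / n%:R)).
have P0 : P ord0 by rewrite /P /= mul0r mulr_gt0.
have [k0 /andP[k0p lo] k0_max] := arg_maxnP (fun k : 'I_n.+1 => val k) P0.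
exists k0; split => //; first by rewrite ltr_pdivrMr // mulrC.
set c := expR (- (ln r%:R - D)) / (n.+1)%:R.
have c_le : c <= (n.+1)%:R^-1.
  by rewrite ler_piMl ?invr_ge0 ?ler0n // expR_le1 oppr_le0 ltW // lnr_sub_Delta_gt0.
have next : (k0.+1)%:R < n%:R * p -> c <= binom_pmf n p k0.+1.
  move=> k1p; have k1n : (k0.+1 < n)%N.
    by rewrite -(ltr_nat R) (lt_le_trans k1p) // ler_piMr ?ler0n ?ltW.
  have notP : ~~ P (Ordinal (ltnW k1n : (k0.+1 < n.+1)%N)).
    by apply/negP => /k0_max; rewrite /= ltnn.
  move: notP; rewrite /P /= k1p /= -ltNge => hi.
  apply: le_trans (expR_KLe_le_binom_pmf p01 k1n).
  by rewrite ler_pM2r ?invr_gt0 ?ltr0n // ler_expR lerN2 ltW.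
have := binom_pmf_last_crossing_ge p01 c_le k0p next.
rewrite /c ler_pdivrMr ?ltr0n // -(ler_pM2l r0) r_expR_sub_Delta => eD.
have M0 : 0 < M by apply: lt_le_trans M_ge1.
have A0 : 0 < (n.+1)%:R ^+ 4 * M by rewrite mulr_gt0 // exprn_gt0 // ltr0n.
rewrite -(ler_pM2r A0) mulrA -expR_Delta (le_trans eD) //.
have -> : r%:R * (n%:R * M * binom_pmf n p k0 * (n.+1)%:R) =
          ((n.+1) * n)%:R * (M * (r%:R * binom_pmf n p k0)) by rewrite natrM; ring.
have -> : r%:R * binom_pmf n p k0 * ((n.+1)%:R ^+ 4 * M) =
          (n.+1)%:R ^+ 4 * (M * (r%:R * binom_pmf n p k0)) by ring.
have X0 : 0 <= r%:R * binom_pmf n p k0 by rewrite mulr_ge0 ?ler0n ?binom_pmf_ge0.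
rewrite (ler_wpM2r (mulr_ge0 (ltW M0) X0)) // -natrX ler_nat.
by rewrite expnS leq_mul // (leq_trans (leqnSn n)) // expnS leq_pmulr // expn_gt0.
Qed.

Lemma concentrated_of_hit (k0 : 'I_n.+1) (y : {ffun 'I_r -> 'I_n.+1}) i :
  k0%:R / n%:R < p -> ln r%:R - D <= nKL (k0%:R / n%:R) -> y i = k0 ->
  (forall j, nKL ((y j)%:R / n%:R) <= ln r%:R + D) ->
  [&& Zmin y < p, (log2 r%:R - Delta delta p n) / n%:R <= KL (Zmin y) p &
      KL (Zmin y) p <= (log2 r%:R + Delta delta p n) / n%:R].
Proof.
move=> k0p lo yi hi; rewrite KL_ge_lowerE KL_le_upperE.
have Zk0 : Zmin y <= k0%:R / n%:R :> R by rewrite -yi Zmin_le.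
have Z0 : 0 <= Zmin y :> R by rewrite divr_ge0 ?ler0n.
apply/and3P; split; first exact: le_lt_trans Zk0 k0p.
  have /andP[p0 p1] := p01.
  by apply: le_trans lo _; rewrite ler_wpM2l ?ler0n // KLe_decreasing ?Z0 ?Zk0 ?(ltW k0p).
by have [j ->] := Zmin_attained R y r_gt0.
Qed.

Lemma min_binomial_KL_concentration :
  (log2 r%:R - Delta delta p n) / n%:R <= KL 0 p ->
  1 - delta <= Pr (fun y => [&& Zmin y < p,
      (log2 r%:R - Delta delta p n) / n%:R <= KL (Zmin y) p &
      KL (Zmin y) p <= (log2 r%:R + Delta delta p n) / n%:R]).
Proof.
rewrite KL_ge_lowerE => /exists_typical_value[k0 [k0p lo big]].
rewrite iid_binom_probC lerD2l lerN2.
pose miss (y : {ffun 'I_r -> 'I_n.+1}) := [forall i, y i != k0].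
pose tail (y : {ffun 'I_r -> 'I_n.+1}) := [exists i, ln r%:R + D < nKL ((y i)%:R / n%:R)].
apply: (@le_trans _ _ (Pr (fun y => miss y || tail y))).
  apply: (iid_binom_prob_le p01') => y; apply: contraR.
  rewrite negb_or => /andP[/forallPn[i /negPn /eqP yi] /existsPn notail].
  by apply: concentrated_of_hit yi _ => // j; rewrite leNgt notail.
apply: le_trans (iid_binom_prob_union p01' miss tail) _.
by have := prob_avoid_le_half big; have := prob_KLe_tail; lra.
Qed.

Lemma min_binomial_zero :
  KL 0 p < (log2 r%:R - Delta delta p n) / n%:R ->
  1 - delta <= Pr (fun y => Zmin y == 0 :> R).
Proof.
rewrite KL_lt_lowerE => hlt.
have pmf0 : binom_pmf n p 0 = expR (- nKL 0).
  rewrite (binom_pmf_KLe p01 n_gt0 (leq0n n)) mul0r /binom_pmf bin0.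
  by rewrite !expr0 subr0 expr1n !mul1r.
have big : 2 / delta <= r%:R * binom_pmf n p (@ord0 n).
  have eD : 2 / delta <= expR D.
    rewrite expR_Delta -mulrA ler_peMr ?divr_ge0 ?ler0n ?(ltW d0) //.
    by rewrite mulr_ege1 ?M_ge1 // exprn_ege1 // ler1n.
  apply: le_trans eD _.
  by rewrite -r_expR_sub_Delta pmf0 ler_wpM2l ?ler0n // ler_expR lerN2 ltW.
have hit :
    Pr (fun y => ~~ [forall i, y i != @ord0 n]) <= Pr (fun y => Zmin y == 0 :> R).
  apply: (iid_binom_prob_le p01') => y /forallPn[i /negPn /eqP yi].
  have := Zmin_le R y i; rewrite yi mul0r => Z_le0.
  by rewrite eq_le Z_le0 divr_ge0 ?ler0n.
have miss := prob_avoid_le_half big.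
have missC :=
  iid_binom_probC p (fun y : {ffun 'I_r -> 'I_n.+1} => [forall i, y i != @ord0 n]).
by apply: le_trans hit; have := d0; lra.
Qed.

End MinOfBinomials.

Unset Implicit Arguments.

Theorem theorem1 (R : realType) (n r : nat) (p delta : R) :
  (1 <= n)%N -> (1 <= r)%N ->
  0 < p < 1 -> 0 < delta < 1 ->
  Delta delta p n < log2 r%:R ->
  (KL 0 p >= (log2 r%:R - Delta delta p n) / n%:R ->
     iid_binom_prob n r p (fun y =>
        [&& Zmin y < p,
            (log2 r%:R - Delta delta p n) / n%:R <= KL (Zmin y) p &
            KL (Zmin y) p <= (log2 r%:R + Delta delta p n) / n%:R])
     >= 1 - delta) /\
  (KL 0 p < (log2 r%:R - Delta delta p n) / n%:R ->
     iid_binom_prob n r p (fun y => Zmin y == 0 :> R) >= 1 - delta).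
Proof.
move=> n_gt0 r_gt0 p01 delta01 Delta_lt; split.
  exact: min_binomial_KL_concentration.
exact: min_binomial_zero.
Qed.
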